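(* There is an absolute constant $C>0$ such that for all scalars $\beta>0$ and $n\in\mathbb{N}$ there are vectors $\mathbf{a},\mathbf{u},\mathbf{q}\in\mathbb{R}^{2n+2}$ with $\psi_n(\beta t)=\mathbf{a}^\top[\mathbf{u}t+\mathbf{q}]_+$ for all $t\in\mathbb{R}$, $\mathbf{u}^\top\mathbf{q}=0$, $\|\mathbf{u}\|=1$, and $\|\mathbf{a}\|^2+\|\mathbf{q}\|^2\le C(n^4\beta^2+\beta^{-2})$.
   Context: The sawtooth $\psi_n:\mathbb{R}\to[-1,1]$ is $\psi_n(t)=-2n[t+1]_++2n[t-1]_++4n\sum_{j=1}^n\big((-1)^{j+n+1}[t-\tfrac{2j-1}{2n}]_++(-1)^{j+n}[t+\tfrac{2j-1}{2n}]_+\big)$; $[\cdot]_+$ is the entrywise ReLU. *)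

From mathcomp Require Import all_boot all_order all_algebra.
From mathcomp Require Import reals.
Set Implicit Arguments. Unset Strict Implicit. Unset Printing Implicit Defensive.
Import Order.TTheory GRing.Theory Num.Theory.
Local Open Scope ring_scope.

Definition relu {R : realType} (x : R) : R := Num.max x 0.

Definition relu_mx {R : realType} {m : nat} (v : 'cV[R]_m) : 'cV[R]_m :=
  map_mx relu v.

Definition sqnorm {R : realType} {m : nat} (v : 'cV[R]_m) : R :=
  \sum_(i < m) (v i 0) ^+ 2.

Definition psi {R : realType} (n : nat) (t : R) : R :=
  - (2 * n%:R) * relu (t + 1) + (2 * n%:R) * relu (t - 1)
  + (4 * n%:R) * \sum_(1 <= j < n.+1)
      ((-1) ^+ (j + n + 1) * relu (t - (2 * j - 1)%:R / (2 * n)%:R)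
       + (-1) ^+ (j + n) * relu (t + (2 * j - 1)%:R / (2 * n)%:R)).

From mathcomp Require Import all_boot all_order all_algebra.
From mathcomp Require Import reals.
From mathcomp Require Import ring lra zify.
Import Order.TTheory GRing.Theory Num.Theory.
Local Open Scope ring_scope.

(** ψ_n is a combination of 2n+2 ReLU units [c_i [x + b_i]_+] with
    [|c_i| <= 4n], [|b_i| <= 1] and biases in opposite pairs, so [Σ b_i = 0].
    By positive homogeneity, [c [βt + b]_+ = (βs c) [t/s + b/(βs)]_+] for any
    [s > 0]; taking [s = √(2n+2)] makes [u = (1/s, …, 1/s)] a unit vector
    orthogonal to [q = b/(βs)], with [‖q‖² <= β⁻²] and
    [‖a‖² = β² s² ‖c‖² <= 16 (2n+2)² n² β² <= 256 n⁴ β²]. *)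

Lemma sumr_half_odd (V : nmodType) (F : nat -> bool -> V) (m : nat) :
  \sum_(0 <= i < 2 * m) F i./2 (odd i) = \sum_(0 <= j < m) (F j false + F j true).
Proof.
elim: m => [|m IH]; first by rewrite !big_geq.
rewrite mulnS !big_nat_recr //= IH -addrA mul2n.
by rewrite uphalf_double odd_double (half_bit_double m false).
Qed.

Section ReluNet.
Variable R : realType.

Lemma relu_pM (k y : R) : 0 <= k -> relu (k * y) = k * relu y.
Proof. by move=> k_ge0; rewrite /relu maxr_pMr // mulr0. Qed.

Lemma relu_net_mxE m (a v : 'cV[R]_m) :
  (a^T *m relu_mx v) 0 0 = \sum_i a i 0 * relu (v i 0).
Proof. by rewrite !mxE; apply: eq_bigr => i _; rewrite !mxE. Qed.

Lemma relu_net_rescale m (c b : 'cV[R]_m) (beta s t : R) :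
  0 < beta -> 0 < s ->
  \sum_i c i 0 * relu (beta * t + b i 0) =
  (((beta * s) *: c)^T *m relu_mx (t *: const_mx s^-1 + (beta * s)^-1 *: b)) 0 0.
Proof.
move=> beta_gt0 s_gt0; have k_gt0 : 0 < beta * s by rewrite mulr_gt0.
rewrite relu_net_mxE; apply: eq_bigr => i _; rewrite !mxE.
have -> : t * s^-1 + (beta * s)^-1 * b i 0 = (beta * s)^-1 * (beta * t + b i 0).
  by field; rewrite !gt_eqF.
by rewrite relu_pM ?invr_ge0 ?ltW //; field; rewrite !gt_eqF.
Qed.

Lemma sqnormZ m (k : R) (v : 'cV[R]_m) : sqnorm (k *: v) = k ^+ 2 * sqnorm v.
Proof. by rewrite /sqnorm mulr_sumr; apply: eq_bigr => i _; rewrite mxE exprMn. Qed.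

Lemma sqnorm_const m (k : R) : sqnorm (const_mx k : 'cV[R]_m) = m%:R * k ^+ 2.
Proof.
rewrite /sqnorm (eq_bigr (fun=> k ^+ 2)) => [|i _]; last by rewrite mxE.
by rewrite sumr_const card_ord mulr_natl.
Qed.

Lemma sqnorm_le m (v : 'cV[R]_m) (k : R) :
  (forall i, v i 0 ^+ 2 <= k) -> sqnorm v <= m%:R * k.
Proof.
move=> v_le; rewrite -[m in m%:R]card_ord mulr_natl -sumr_const.
exact: ler_sum.
Qed.

Lemma const_mx_dotE m (k : R) (v : 'cV[R]_m) :
  ((const_mx k : 'cV[R]_m)^T *m v) 0 0 = k * \sum_i v i 0.
Proof. by rewrite !mxE mulr_sumr; apply: eq_bigr => i _; rewrite !mxE. Qed.

Lemma relu_net_normalize m (c b : 'cV[R]_m) (K B beta : R) :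
  (0 < m)%N -> 0 < beta -> \sum_i b i 0 = 0 ->
  (forall i, c i 0 ^+ 2 <= K) -> (forall i, b i 0 ^+ 2 <= B) ->
  exists a u q : 'cV[R]_m,
    (forall t, \sum_i c i 0 * relu (beta * t + b i 0)
               = (a^T *m relu_mx (t *: u + q)) 0 0) /\
    (u^T *m q) 0 0 = 0 /\ sqnorm u = 1 /\
    sqnorm a + sqnorm q <= m%:R ^+ 2 * K * beta ^+ 2 + B * beta ^-2.
Proof.
move=> m_gt0 beta_gt0 b_sum0 c_le b_le; set s : R := Num.sqrt m%:R.
have m_neq0 : m%:R != 0 :> R by rewrite pnatr_eq0 -lt0n.
have s_gt0 : 0 < s by rewrite sqrtr_gt0 ltr0n.
have s2E : s ^+ 2 = m%:R by rewrite sqr_sqrtr // ler0n.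
exists ((beta * s) *: c), (const_mx s^-1), ((beta * s)^-1 *: b).
split; [|split; [|split]].
- by move=> t; apply: relu_net_rescale.
- rewrite const_mx_dotE; under eq_bigr do rewrite mxE.
  by rewrite -mulr_sumr b_sum0 !mulr0.
- by rewrite sqnorm_const exprVn s2E mulfV.
have beta2_gt0 : 0 < beta ^+ 2 by rewrite exprn_gt0.
have bm_gt0 : 0 < beta ^+ 2 * m%:R by rewrite mulr_gt0 ?ltr0n.
rewrite !sqnormZ exprVn !exprMn s2E lerD //.
  have -> : m%:R ^+ 2 * K * beta ^+ 2 = beta ^+ 2 * m%:R * (m%:R * K) by ring.
  by apply: ler_wpM2l; [exact: ltW | exact: sqnorm_le].
have -> : B * beta ^-2 = (beta ^+ 2 * m%:R)^-1 * (m%:R * B).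
  by field; rewrite m_neq0 gt_eqF.
by apply: ler_wpM2l; [rewrite invr_ge0 ltW | exact: sqnorm_le].
Qed.

End ReluNet.

Section SawtoothUnits.
Variables (R : realType) (n : nat).

(** Unit [(j, e)] of ψ_n: [j = 0] gives the outer units at [∓1], [j >= 1] the
    units at [∓(2j-1)/(2n)]; [e] selects the sign of the bias. *)
Definition psi_bias (j : nat) (e : bool) : R :=
  if j == 0%N then (if e then -1 else 1)
  else (if e then 1 else -1) * ((2 * j - 1)%:R / (2 * n)%:R).

Definition psi_coef (j : nat) (e : bool) : R :=
  if j == 0%N then (if e then 2 * n%:R else - (2 * n%:R))
  else (if e then (-1) ^+ (j + n) else (-1) ^+ (j + n + 1)) * (4 * n%:R).

Lemma psi_units (x : R) :
  psi n x = \sum_(i < 2 * n + 2)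
              psi_coef i./2 (odd i) * relu (x + psi_bias i./2 (odd i)).
Proof.
pose term i := psi_coef i./2 (odd i) * relu (x + psi_bias i./2 (odd i)).
rewrite -(big_mkord xpredT term) /term -mulnSr.
rewrite (@sumr_half_odd _ (fun j e => psi_coef j e * relu (x + psi_bias j e))).
rewrite big_nat_recl // /psi big_add1 /psi_coef /psi_bias /= mulr_sumr.
congr (_ + _); apply: eq_bigr => j _.
by rewrite mulN1r mul1r; ring.
Qed.

Lemma psi_bias_sum : \sum_(i < 2 * n + 2) psi_bias i./2 (odd i) = 0.
Proof.
rewrite -(big_mkord xpredT (fun i => psi_bias i./2 (odd i))) -mulnSr.
rewrite (@sumr_half_odd _ psi_bias) big1 // => j _.
by rewrite /psi_bias; case: eqP => _; rewrite ?mulN1r ?mul1r ?subrr // addNr.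
Qed.

Lemma psi_coef_sq j e : psi_coef j e ^+ 2 <= 16 * n%:R ^+ 2.
Proof.
have n2_ge0 : 0 <= (n%:R : R) ^+ 2 by rewrite sqr_ge0.
rewrite /psi_coef; case: eqP => _; case: e;
  by rewrite ?sqrrN exprMn ?sqrr_sign ?mul1r ?exprMn; lra.
Qed.

Lemma psi_bias_sq j e : (j <= n)%N -> psi_bias j e ^+ 2 <= 1.
Proof.
move=> le_jn; rewrite /psi_bias; case: eqP => [_|/eqP j_neq0].
  by case: e; rewrite ?sqrrN expr1n.
have n_gt0 : (0 < n)%N by apply: leq_trans le_jn; rewrite lt0n.
have r_ge0 : 0 <= (2 * j - 1)%:R / (2 * n)%:R :> R by rewrite divr_ge0.
have r_le1 : (2 * j - 1)%:R / (2 * n)%:R <= 1 :> R.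
  by rewrite ler_pdivrMr ?ltr0n ?muln_gt0 // mul1r ler_nat; lia.
by case: e; rewrite ?mulN1r ?mul1r ?sqrrN exprn_ile1.
Qed.

End SawtoothUnits.

Theorem lemma11 (R : realType) :
  exists C : R, 0 < C /\
  forall (beta : R) (n : nat), 0 < beta ->
  exists a u q : 'cV[R]_(2 * n + 2),
    (forall t : R, psi n (beta * t) = (a^T *m relu_mx (t *: u + q)) 0 0) /\
    (u^T *m q) 0 0 = 0 /\
    sqnorm u = 1 /\
    sqnorm a + sqnorm q <= C * ((n%:R) ^+ 4 * beta ^+ 2 + beta ^-2).
Proof.
exists 256; split => // beta n beta_gt0.
pose c := \col_(i < 2 * n + 2) psi_coef R n i./2 (odd i).
pose b := \col_(i < 2 * n + 2) psi_bias R n i./2 (odd i).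
have b_sum0 : \sum_i b i 0 = 0.
  by under eq_bigr do rewrite mxE; exact: psi_bias_sum.
have c_le i : c i 0 ^+ 2 <= 16 * n%:R ^+ 2 by rewrite mxE psi_coef_sq.
have b_le i : b i 0 ^+ 2 <= 1.
  by rewrite mxE psi_bias_sq //; have := ltn_ord i; lia.
have width_gt0 : (0 < 2 * n + 2)%N by rewrite addn2.
have [a [u [q [net [uq [u1 aq_le]]]]]] :=
  @relu_net_normalize R _ _ _ _ _ _ width_gt0 beta_gt0 b_sum0 c_le b_le.
exists a, u, q; split=> [t|].
  by rewrite psi_units -net; apply: eq_bigr => i _; rewrite !mxE.
do 2!split=> //; apply: (le_trans aq_le).
have width_le : (2 * n + 2)%:R ^+ 2 * (16 * n%:R ^+ 2) <= 256 * n%:R ^+ 4 :> R.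
  by rewrite -!natrX -!natrM ler_nat; nia.
have beta2_ge0 : 0 <= beta ^+ 2 by rewrite sqr_ge0.
rewrite div1r mulrDr mulrA lerD //; first exact: ler_wpM2r.
by apply: ler_peMl; [rewrite invr_ge0 | lra].
Qed.
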